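(* Let $p:\tilde{Q}\to Q$ be a covering of finite quandles such that $\mathrm{Aut}(p)$ acts transitively on each fiber. If $y\in p^{-1}(x)$ for some $x\in Q$ and $\beta\in\mathrm{Inn}(\tilde{Q})$ satisfies $\beta(y)=y$, then $\beta$ acts as the identity on the fiber $p^{-1}(x)$. Hence if $y_0,y_1,y_2\in p^{-1}(x)$ and $(y_0,y_1)$ and $(y_0,y_2)$ lie in the same orbit of $\mathrm{Inn}(\tilde{Q})$ acting diagonally on pairs, then $y_1=y_2$.
   Context: A quandle is a set with operation $*$ satisfying $a*a=a$; unique right division; $(a*b)*c=(a*c)*(b*c)$. $R_a(y)=y*a$; $\mathrm{Inn}(\tilde Q)$ is the group generated by the $R_a$, $a\in\tilde Q$. A covering is a quandle epimorphism $p:\tilde Q\to Q$ with $p(y_1)=p(y_2)\Rightarrow R_{y_1}=R_{y_2}$; $\mathrm{Aut}(p)$ is the group of automorphisms $\lambda$ of $\tilde Q$ with $p\circ\lambda=p$. *)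

From mathcomp Require Import all_boot all_fingroup.
Set Implicit Arguments. Unset Strict Implicit. Unset Printing Implicit Defensive.

Definition is_quandle (T : finType) (op : T -> T -> T) : Prop :=
  [/\ (forall a, op a a = a),
      (forall a, bijective (fun y => op y a)) &
      (forall a b c, op (op a b) c = op (op a c) (op b c))].

Definition Rtrans (T : finType) (op : T -> T -> T) (a : T) : T -> T :=
  fun y => op y a.

Definition Rperms (T : finType) (op : T -> T -> T) : {set {perm T}} :=
  [set s : {perm T} | [exists a : T, [forall y : T, s y == op y a]]].

Definition Inn (T : finType) (op : T -> T -> T) : {set {perm T}} :=
  <<Rperms op>>%g.

Definition quandle_hom (T T' : finType) (op : T -> T -> T) (op' : T' -> T' -> T')
  (f : T -> T') : Prop :=
  forall a b, f (op a b) = op' (f a) (f b).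

Definition covering (Qt Q : finType) (opt : Qt -> Qt -> Qt) (opq : Q -> Q -> Q)
  (p : Qt -> Q) : Prop :=
  [/\ quandle_hom opt opq p,
      (forall x : Q, exists y : Qt, p y = x) &
      (forall y1 y2 : Qt, p y1 = p y2 -> Rtrans opt y1 = Rtrans opt y2)].

Definition in_Aut_p (Qt Q : finType) (opt : Qt -> Qt -> Qt) (p : Qt -> Q)
  (lam : {perm Qt}) : Prop :=
  quandle_hom opt opt lam /\ (forall y, p (lam y) = p y).

(* Deck transformations commute with every inner automorphism, so if beta fixes
   y and lam moves y to z within its fibre, then beta z = beta (lam y) =
   lam (beta y) = lam y = z.  Transitivity of Aut(p) on fibres reaches every z. *)

From mathcomp Require Import all_boot all_fingroup.

Set Implicit Arguments. Unset Strict Implicit. Unset Printing Implicit Defensive.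

Section InnerAutomorphisms.

Variables (T : finType) (op : T -> T -> T).

Lemma Inn_sub_cent1 (lam : {perm T}) :
  quandle_hom op op lam -> (forall a, Rtrans op (lam a) = Rtrans op a) ->
  Inn op \subset 'C[lam]%g.
Proof.
move=> lam_hom R_lam; rewrite gen_subG; apply/subsetP => s.
rewrite inE => /existsP [a /forallP sE]; apply/cent1P/permP => y.
rewrite !permM (eqP (sE (lam y))) (eqP (sE y)) lam_hom.
by have /(congr1 (fun f => f (lam y))) := R_lam a.
Qed.

Lemma Inn_commute (lam beta : {perm T}) :
  quandle_hom op op lam -> (forall a, Rtrans op (lam a) = Rtrans op a) ->
  beta \in Inn op -> forall z, beta (lam z) = lam (beta z).
Proof.
move=> lam_hom R_lam /(subsetP (Inn_sub_cent1 lam_hom R_lam)) /cent1P comm z.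
by rewrite -!permM comm.
Qed.

End InnerAutomorphisms.

Section Coverings.

Variables (Qt Q : finType) (opt : Qt -> Qt -> Qt) (opq : Q -> Q -> Q).
Variable p : Qt -> Q.
Hypothesis p_covering : covering opt opq p.

Lemma Aut_p_commute_Inn (lam beta : {perm Qt}) :
  in_Aut_p opt p lam -> beta \in Inn opt -> forall z, beta (lam z) = lam (beta z).
Proof.
case: p_covering => _ _ R_fibre [lam_hom p_lam].
by apply: Inn_commute => // a; apply: R_fibre.
Qed.

Hypothesis Aut_p_transitive : forall y1 y2 : Qt, p y1 = p y2 ->
  exists lam : {perm Qt}, in_Aut_p opt p lam /\ lam y1 = y2.

Lemma Inn_stabiliser_fixes_fibre (y z : Qt) (beta : {perm Qt}) :
  p y = p z -> beta \in Inn opt -> beta y = y -> beta z = z.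
Proof.
move=> pyz beta_Inn beta_y.
have [lam [lam_Aut <-]] := Aut_p_transitive pyz.
by rewrite Aut_p_commute_Inn // beta_y.
Qed.

End Coverings.

Theorem mainTheorem12 (Qt Q : finType) (opt : Qt -> Qt -> Qt) (opq : Q -> Q -> Q)
  (p : Qt -> Q) :
  is_quandle opt -> is_quandle opq -> covering opt opq p ->
  (forall y1 y2 : Qt, p y1 = p y2 ->
     exists lam : {perm Qt}, in_Aut_p opt p lam /\ lam y1 = y2) ->
  (forall (x : Q) (y : Qt), p y = x ->
     forall beta : {perm Qt}, beta \in Inn opt -> beta y = y ->
     forall z : Qt, p z = x -> beta z = z)
  /\
  (forall (x : Q) (y0 y1 y2 : Qt), p y0 = x -> p y1 = x -> p y2 = x ->
     (exists2 beta : {perm Qt}, beta \in Inn opt & (beta y0, beta y1) = (y0, y2)) ->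
     y1 = y2).
Proof.
move=> _ _ p_cov Aut_trans; split.
  move=> x y <- beta beta_Inn beta_y z /esym pyz.
  exact: (Inn_stabiliser_fixes_fibre p_cov Aut_trans pyz).
move=> x y0 y1 y2 <- /esym p01 _ [beta beta_Inn [beta_y0 <-]].
by rewrite (Inn_stabiliser_fixes_fibre p_cov Aut_trans p01).
Qed.
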